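(* Every ABC scoring rule satisfies group participation. That is, if $f$ is the ABC scoring rule induced by a scoring function $s$, then for every approval profile $A$, every committee size $k\in\{1,\dots,m-1\}$ and every group of voters $I\subsetneq N_A$, it is not the case that $f(A_{-I},k)\succsim_i f(A,k)$ for all $i\in I$ while $f(A_{-I},k)\succ_{i^*} f(A,k)$ for some $i^*\in I$.
   Context: Let $C$ be a finite set of $m>1$ candidates. An approval profile $A$ consists of a nonempty finite set of voters $N_A$ and, for each voter $i\in N_A$, a nonempty ballot $A_i\subseteq C$. For $I\subsetneq N_A$, $A_{-I}$ denotes the profile obtained by removing the voters in $I$ (electorate $N_A\setminus I$, ballots unchanged). For $k\in\{1,\dots,m-1\}$ let $\mathcal W_k$ be the set of $k$-element subsets (committees) of $C$. An ABC voting rule $f$ maps each profile $A$ and size $k$ to a nonempty set $f(A,k)\subseteq\mathcal W_k$. Preferences: voter $i$ weakly prefers committee $W$ to $W'$ ($W\succsim_i W'$) if $|W\cap A_i|\ge|W'\cap A_i|$, strictly ($W\succ_i W'$) if $|W\cap A_i|>|W'\cap A_i|$. For sets of committees $X,Y$ (Kelly's extension): $X\succsim_i Y$ iff $W\succsim_i W'$ for all $W\in X$, $W'\in Y$; $X\succ_i Y$ iff $X\succsim_i Y$ and there exist $W\in X$, $W'\in Y$ with $W\succ_i W'$. ABC scoring rules: a scoring function $s$ assigns to all integers $0\le x\le y$ a rational number $s(x,y)$ with $s(0,y)=0$ and $s(x,y)\ge s(x',y)$ whenever $x'\le x\le y$. The score of committee $W$ in $A$ is $\hat s(A,W)=\sum_{i\in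 N_A}s(|A_i\cap W|,|A_i|)$, and the induced rule returns all $W\in\mathcal W_k$ maximizing $\hat s(A,W)$. *)

From mathcomp Require Import all_boot all_order all_algebra.
Set Implicit Arguments. Unset Strict Implicit. Unset Printing Implicit Defensive.
Import Order.TTheory GRing.Theory Num.Theory.
Local Open Scope ring_scope.

(* Candidates: a finType C (m = #|C|).  Voters are drawn from a finType V;
   a profile is an electorate N : {set V} together with ballots A : V -> {set C}
   (only the ballots of voters in N matter). *)

Definition scoring_function (s : nat -> nat -> rat) : Prop :=
  (forall y : nat, s 0%N y = 0) /\
  (forall x x' y : nat, (x' <= x)%N -> (x <= y)%N -> s x' y <= s x y).

Definition abc_score (C V : finType) (s : nat -> nat -> rat)
  (N : {set V}) (A : V -> {set C}) (W : {set C}) : rat :=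
  \sum_(i in N) s #|A i :&: W| #|A i|.

Definition scoring_rule (C V : finType) (s : nat -> nat -> rat)
  (N : {set V}) (A : V -> {set C}) (k : nat) : {set {set C}} :=
  [set W : {set C} | (#|W| == k) &&
     [forall W' : {set C}, (#|W'| == k) ==> (abc_score s N A W' <= abc_score s N A W)]].

Definition pref_weak (C : finType) (Ai W W' : {set C}) : bool :=
  (#|W' :&: Ai| <= #|W :&: Ai|)%N.
Definition pref_strict (C : finType) (Ai W W' : {set C}) : bool :=
  (#|W' :&: Ai| < #|W :&: Ai|)%N.

Definition kelly_weak (C : finType) (Ai : {set C}) (X Y : {set {set C}}) : Prop :=
  forall W W', W \in X -> W' \in Y -> pref_weak Ai W W'.
Definition kelly_strict (C : finType) (Ai : {set C}) (X Y : {set {set C}}) : Prop :=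
  kelly_weak Ai X Y /\ exists W W', [/\ W \in X, W' \in Y & pref_strict Ai W W'].

From mathcomp Require Import all_boot all_order all_algebra.
Set Implicit Arguments. Unset Strict Implicit. Unset Printing Implicit Defensive.
Import Order.TTheory GRing.Theory Num.Theory.
Local Open Scope ring_scope.

(* Let W win after the group I leaves and W' win before.  If every member of I
   weakly prefers W to W', then I gives W at least the score of W'; adding I
   back therefore keeps W optimal, and removing I keeps W' optimal.  So W' is
   also a winner without I and W is also a winner with I, and the voter who
   strictly prefers W to W' would have to weakly prefer W' to W. *)

Section ScoringRule.

Variables (C V : finType) (s : nat -> nat -> rat).

Lemma scoring_ruleP (N : {set V}) (A : V -> {set C}) (k : nat) (W : {set C}) :
  reflect (#|W| = k /\ forall U : {set C}, #|U| = k -> abc_score s N A U <= abc_score s N A W)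
          (W \in scoring_rule s N A k).
Proof.
rewrite inE; apply: (iffP andP) => [[/eqP cW /forallP hW] | [cW hW]].
  by split=> // U cU; apply: (implyP (hW U)); apply/eqP.
by split; [apply/eqP | apply/forallP => U; apply/implyP => /eqP /hW].
Qed.

Lemma abc_score_setD (N I : {set V}) (A : V -> {set C}) (W : {set C}) :
  I \subset N -> abc_score s N A W = abc_score s (N :\: I) A W + abc_score s I A W.
Proof.
by move=> sIN; rewrite /abc_score (big_setID I) /= addrC (setIidPr sIN).
Qed.

Lemma abc_score_le_pref (I : {set V}) (A : V -> {set C}) (W W' : {set C}) :
  scoring_function s -> (forall i, i \in I -> pref_weak (A i) W W') ->
  abc_score s I A W' <= abc_score s I A W.
Proof.
move=> [_ s_mono] hpref; apply: ler_sum => i iI; apply: s_mono.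
  by rewrite [A i :&: W]setIC [A i :&: W']setIC; exact: hpref.
by rewrite subset_leq_card // subsetIl.
Qed.

Lemma scoring_rule_exchange (N I : {set V}) (A : V -> {set C}) (k : nat)
    (W W' : {set C}) :
  I \subset N -> W \in scoring_rule s (N :\: I) A k -> W' \in scoring_rule s N A k ->
  abc_score s I A W' <= abc_score s I A W ->
  W \in scoring_rule s N A k /\ W' \in scoring_rule s (N :\: I) A k.
Proof.
move=> sIN /scoring_ruleP[cW maxW] /scoring_ruleP[cW' maxW'] leI.
have le_N : abc_score s N A W' <= abc_score s N A W.
  by rewrite !(abc_score_setD _ _ sIN) lerD // maxW.
split; apply/scoring_ruleP; split=> // U cU.
  exact: le_trans (maxW' U cU) le_N.
apply: le_trans (maxW U cU) _; rewrite -(lerD2r (abc_score s I A W)).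
apply: le_trans (_ : abc_score s N A W' <= _); last first.
  by rewrite (abc_score_setD _ _ sIN) lerD2l.
by rewrite -(abc_score_setD _ _ sIN) maxW'.
Qed.

End ScoringRule.

Theorem theorem1 (C V : finType) (s : nat -> nat -> rat)
  (Hs : scoring_function s)
  (N : {set V}) (A : V -> {set C})
  (HN : N != set0) (HA : forall i, i \in N -> A i != set0)
  (k : nat) (Hk1 : (1 <= k)%N) (Hkm : (k < #|C|)%N)
  (I : {set V}) (HI : I \proper N) :
  ~ ((forall i, i \in I ->
        kelly_weak (A i) (scoring_rule s (N :\: I) A k) (scoring_rule s N A k)) /\
     (exists2 istar, istar \in I &
        kelly_strict (A istar) (scoring_rule s (N :\: I) A k) (scoring_rule s N A k))).
Proof.
case=> weakI [j jI [_ [W [W' [WX W'Y strict_j]]]]].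
have sIN : I \subset N := proper_sub HI.
have leI : abc_score s I A W' <= abc_score s I A W.
  by apply: abc_score_le_pref => // i iI; exact: weakI.
have [WY W'X] := scoring_rule_exchange sIN WX W'Y leI.
by move: strict_j (weakI j jI W' W W'X WY); rewrite /pref_strict /pref_weak ltnNge => /negP.
Qed.
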